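(* Let $k\ge2$. Let $\alpha(x)=\forall y\,([y^{-1}xy,x]=e)$, $\beta(y)=\forall x\,(\alpha(x)\rightarrow y^{-1}xy=x^k)$, and let $\gamma(x,y,z,t)$ be a group formula such that for every $b_1\in Ab$ and all $n,l,m\in\mathbb{Z}$, $BS(1,k)\models\gamma(b_1^n,b_1^l,b_1^m,b_1)$ iff $nl=m$. Define $\tau(x,y,h,b_1)=\alpha(x)\wedge\alpha(y)\wedge([h,b_1]=e)\wedge\beta(b_1)\wedge\forall v\,\forall w\,\big([v,b_1]=[w,b_1]=e\wedge\gamma(h,v,w,b_1)\rightarrow\exists u\,(\alpha(u)\wedge[v,y]=[w,x][v,[u,v]])\big)$. Then for $x,y,h,b_1\in BS(1,k)$, $BS(1,k)\models\tau(x,y,h,b_1)$ if and only if $b_1\in Ab$, $x=a^l$ and $y=a^t$ for some $l,t\in\mathbb{Z}[1/k]$, $h=b_1^z$ for some $z\in\mathbb{Z}$, and $l\cdot z=t$.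
   Context: $BS(1,k)=\langle a,b\mid b^{-1}ab=a^k\rangle$, identified with $\mathbb{Z}[1/k]\rtimes\mathbb{Z}$ (pairs $(y,m)$, $y\in\mathbb{Z}[1/k]=\{zk^i:z,i\in\mathbb{Z}\}$, product $(y_1,m_1)(y_2,m_2)=(y_1+y_2k^{-m_1},m_1+m_2)$), with $a=(1,0)$, $b=(0,1)$; $a^y=(y,0)$ for $y\in\mathbb{Z}[1/k]$. $Ab=\{a^yb:y\in\mathbb{Z}[1/k]\}$. The commutator is $[x,y]=x^{-1}y^{-1}xy$. *)

(* Model of BS(1,k) = Z[1/k] ⋊ Z as pairs (y,m) : rat * int,
   with the carrier cut out by the predicate [inBS k] (y in Z[1/k]). *)
From mathcomp Require Import all_boot all_order all_algebra.
Set Implicit Arguments. Unset Strict Implicit. Unset Printing Implicit Defensive.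
Import Order.TTheory GRing.Theory Num.Theory.
Local Open Scope ring_scope.

Definition inZk (k : nat) (q : rat) : Prop :=
  exists (z i : int), q = z%:~R * (k%:R : rat) ^ i.

Definition BSel := (rat * int)%type.

Definition inBS (k : nat) (g : BSel) : Prop := inZk k g.1.

Definition bsmul (k : nat) (g1 g2 : BSel) : BSel :=
  (g1.1 + g2.1 * (k%:R : rat) ^ (- g1.2), g1.2 + g2.2).
Definition bsone : BSel := (0, 0).
Definition bsinv (k : nat) (g : BSel) : BSel :=
  (- (g.1 * (k%:R : rat) ^ g.2), - g.2).

Definition bsexp (k : nat) (g : BSel) (n : int) : BSel :=
  match n with
  | Posz n => iter n (bsmul k g) bsone
  | Negz n => iter n.+1 (bsmul k (bsinv k g)) bsone
  end.

Definition bsapow (y : rat) : BSel := (y, 0).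
Definition bsb : BSel := (0, 1).

Definition bsconj (k : nat) (x y : BSel) : BSel :=
  bsmul k (bsmul k (bsinv k y) x) y.
Definition bscomm (k : nat) (x y : BSel) : BSel :=
  bsmul k (bsmul k (bsmul k (bsinv k x) (bsinv k y)) x) y.

Definition inAb (k : nat) (g : BSel) : Prop :=
  exists y, inZk k y /\ g = bsmul k (bsapow y) bsb.

Definition alpha (k : nat) (x : BSel) : Prop :=
  forall y, inBS k y -> bscomm k (bsconj k x y) x = bsone.

Definition beta (k : nat) (y : BSel) : Prop :=
  forall x, inBS k x -> alpha k x -> bsconj k x y = bsexp k x (Posz k).

Definition tau (k : nat) (gamma : BSel -> BSel -> BSel -> BSel -> Prop)
  (x y h b1 : BSel) : Prop :=
  [/\ alpha k x, alpha k y, bscomm k h b1 = bsone, beta k b1 &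
   forall v w, inBS k v -> inBS k w ->
     bscomm k v b1 = bsone -> bscomm k w b1 = bsone -> gamma h v w b1 ->
     exists u, inBS k u /\ alpha k u /\
       bscomm k v y = bsmul k (bscomm k w x) (bscomm k v (bscomm k u v))].

(* Commutators of BS(1,k) = Z[1/k] x| Z lie in the normal subgroup A = {a^y} and are
   computed explicitly; alpha(x) says that x lies in A, beta(b) that b has Z-coordinate 1,
   and the centraliser of such a b consists of its powers.  For v = b^p, w = b^(np),
   x = a^l, y = a^t, u = a^s the identity [v,y] = [w,x][v,[u,v]] reads
   t (1 - X) = l (1 - X^n) - s (1 - X)^2 with X = k^p.  Since 1 - X^n = n (1 - X) + G (1 - X)^2
   with G in Z[1/k], it has a solution s in Z[1/k] iff 1 - X divides t - l n in Z[1/k].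
   Hence t = l n gives the witness s = l G, and conversely t - l n is divisible by every
   1 - k^p, so it vanishes: if t - l n = a / k^e with a <> 0, then for p = |a| + 1 the
   number k^p - 1 is coprime to k and exceeds |a|. *)

From mathcomp Require Import all_boot all_order all_algebra.
From mathcomp Require Import ring zify.
Set Implicit Arguments. Unset Strict Implicit. Unset Printing Implicit Defensive.
Import Order.TTheory GRing.Theory Num.Theory.
Local Open Scope ring_scope.

Lemma int_ind_succ (P : int -> Prop) :
  P 0 -> (forall m, P m <-> P (m + 1)) -> forall m, P m.
Proof.
move=> P0 step; elim/int_rect => [//|n Pn|n Pn].
- by rewrite intS addrC; apply/(step n).
- by apply/(step _); rewrite intS opprD addrAC addNr add0r.
Qed.

Section GeometricSums.
Variable F : fieldType.
Implicit Types (X : F) (m : int).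

(* Both vanish at [X = 1], where the denominators are [0]. *)
Definition geom_sum X m := (1 - X ^ m) / (1 - X).
Definition geom_rem X m := (1 - X ^ m - m%:~R * (1 - X)) / (1 - X) ^+ 2.

Lemma one_sub_expz X m : 1 - X ^ m = m%:~R * (1 - X) + geom_rem X m * (1 - X) ^+ 2.
Proof.
have [->|X_neq1] := eqVneq X 1; first by rewrite exp1rz !subrr mulr0 expr0n mulr0 addr0.
by rewrite /geom_rem; field; rewrite subr_eq0 eq_sym.
Qed.

Variable X : F.
Hypotheses (X_neq0 : X != 0) (X_neq1 : X != 1).

Lemma geom_sumD1 m : geom_sum X (m + 1) = geom_sum X m + X ^ m.
Proof. by rewrite /geom_sum expfzDr // expr1z; field; rewrite subr_eq0 eq_sym. Qed.

Lemma geom_remD1 m : geom_rem X (m + 1) = geom_rem X m - geom_sum X m.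
Proof.
by rewrite /geom_rem /geom_sum expfzDr // expr1z intrD; field; rewrite subr_eq0 eq_sym.
Qed.

End GeometricSums.

Section ZInvK.
Variable k : nat.
Hypothesis k_gt0 : (0 < k)%N.
Local Notation K := (k%:R : rat).

Let K_neq0 : K != 0. Proof. by rewrite pnatr_eq0 -lt0n. Qed.

Lemma inZkP q : inZk k q <-> exists n : nat, q * K ^+ n \is a Num.int.
Proof.
have KXn_neq0 n : K ^+ n != 0 by rewrite expf_neq0 ?K_neq0.
split=> [[z [[n|n] ->]]|[n /intrP[z qKn]]].
- by exists 0%N; rewrite mulr1 -exprnP rpredM ?rpredX ?intr_int ?natr_int.
- by exists n.+1; rewrite NegzE -invr_expz -exprnP mulfVK ?intr_int.
- by exists z, (- n%:Z); rewrite -qKn -invr_expz -exprnP mulfK.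
Qed.

Lemma inZk_int (z : int) : inZk k z%:~R.
Proof. by exists z, 0; rewrite expr0z mulr1. Qed.

Lemma inZk_expz m : inZk k (K ^ m).
Proof. by exists 1, m; rewrite mul1r. Qed.

Lemma inZkN a : inZk k a -> inZk k (- a).
Proof. by case=> z [i ->]; exists (- z), i; rewrite intrN mulNr. Qed.

Lemma inZkM a b : inZk k a -> inZk k b -> inZk k (a * b).
Proof.
case=> [x [i ->]] [y [j ->]]; exists (x * y), (i + j).
by rewrite intrM expfzDr ?K_neq0 // mulrACA.
Qed.

Lemma inZkD a b : inZk k a -> inZk k b -> inZk k (a + b).
Proof.
move=> /inZkP[n an] /inZkP[m bm]; apply/inZkP; exists (n + m)%N.
have -> : (a + b) * K ^+ (n + m) = a * K ^+ n * K ^+ m + b * K ^+ m * K ^+ n.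
  by rewrite exprD; ring.
by rewrite rpredD // rpredM // rpredX // natr_int.
Qed.

Lemma inZkB a b : inZk k a -> inZk k b -> inZk k (a - b).
Proof. by move=> ? ?; apply/inZkD/inZkN. Qed.

Lemma inZkDr c a : inZk k c -> inZk k (a + c) <-> inZk k a.
Proof.
move=> Zc; split=> [Zac|Za]; last exact: inZkD.
by rewrite -(addrK c a); apply: inZkB.
Qed.

Lemma inZk_geom_sum p m : inZk k (geom_sum (K ^ p) m).
Proof.
have [->|X_neq1] := eqVneq (K ^ p) 1.
  by rewrite /geom_sum exp1rz subrr mul0r; apply: (inZk_int 0).
have X_neq0 : K ^ p != 0 by rewrite expfz_neq0.
elim/int_ind_succ: m => [|m].
  by rewrite /geom_sum expr0z subrr mul0r; apply: (inZk_int 0).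
rewrite geom_sumD1 //; apply: iff_sym; apply: inZkDr.
by rewrite exprz_exp; apply: inZk_expz.
Qed.

Lemma inZk_geom_rem p m : inZk k (geom_rem (K ^ p) m).
Proof.
have [->|X_neq1] := eqVneq (K ^ p) 1.
  by rewrite /geom_rem exp1rz !subrr mulr0 subrr mul0r; apply: (inZk_int 0).
have X_neq0 : K ^ p != 0 by rewrite expfz_neq0.
elim/int_ind_succ: m => [|m].
  by rewrite /geom_rem expr0z !subrr mul0r subrr mul0r; apply: (inZk_int 0).
by rewrite geom_remD1 //; apply: iff_sym; apply/inZkDr/inZkN/inZk_geom_sum.
Qed.

End ZInvK.

Section BaumslagSolitar.
Variable k : nat.
Hypothesis k_gt1 : (1 < k)%N.
Local Notation K := (k%:R : rat).

Let k_gt0 : (0 < k)%N. Proof. exact: ltnW. Qed.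
Let K_neq0 : K != 0. Proof. by rewrite pnatr_eq0 -lt0n. Qed.
Let expKz_neq0 m : K ^ m != 0. Proof. exact: expfz_neq0. Qed.

Lemma expKz_eq1 m : (K ^ m == 1) = (m == 0).
Proof. by rewrite pexprz_eq1 ?ler0n // pnatr_eq1 gtn_eqF ?orbF. Qed.

Let K_sub1_neq0 : K - 1 != 0.
Proof. by rewrite subr_eq0 -[X in X == _]expr1z expKz_eq1. Qed.

Local Ltac field_K := field; rewrite ?K_neq0 ?K_sub1_neq0 ?expKz_neq0.

Lemma expKz_inj : injective (fun m : int => K ^ m).
Proof.
move=> m n /= eq_mn; apply/eqP; rewrite -subr_eq0 -expKz_eq1.
by rewrite expfzDr // -invr_expz eq_mn mulfV.
Qed.

Lemma bscommE x y : bscomm k x y =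
  bsapow (x.1 * K ^ x.2 * (K ^ y.2 - 1) - y.1 * K ^ y.2 * (K ^ x.2 - 1)).
Proof.
case: x y => [a m] [b n]; rewrite /bscomm /bsmul /bsinv /bsapow /=.
rewrite !opprD !opprK !expfzDr // -!invr_expz.
by congr pair; [field | ring].
Qed.

Lemma bsconjE x y : bsconj k x y = (K ^ y.2 * (x.1 - y.1 + y.1 * K ^ (- x.2)), x.2).
Proof.
case: x y => [a m] [b n]; rewrite /bsconj /bsmul /bsinv /=.
rewrite !opprD !opprK !expfzDr // -!invr_expz.
by congr pair; [field | ring].
Qed.

Lemma inBS_apow1 : inBS k (bsapow 1).
Proof. by exists 1, 0; rewrite expr0z mulr1. Qed.

Lemma alphaP x : alpha k x <-> x.2 = 0.
Proof.
split=> [|x2_0 y _]; last by rewrite bscommE bsconjE /= x2_0 expr0z !subrr !mulr0 subrr.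
move/(_ _ inBS_apow1); rewrite bscommE bsconjE /= expr0z !mul1r => -[comm0].
have : (K ^ x.2 - 1) ^+ 2 = 0.
  by rewrite -oppr0 -comm0 -invr_expz; field.
by move/eqP; rewrite sqrf_eq0 subr_eq0 expKz_eq1 => /eqP.
Qed.

Lemma bsexp_apow y (n : nat) : bsexp k (bsapow y) n = bsapow (y *+ n).
Proof.
elim: n => [|n IHn] //.
have -> : bsexp k (bsapow y) n.+1 = bsmul k (bsapow y) (bsexp k (bsapow y) n) by [].
by rewrite IHn /bsmul /= oppr0 expr0z mulr1 mulrS.
Qed.

Lemma betaP b : beta k b <-> b.2 = 1.
Proof.
split=> [|b2_1 [y m] _ /alphaP m0].
  move/(_ _ inBS_apow1 (proj2 (alphaP (bsapow 1)) erefl)); rewrite bsconjE bsexp_apow /=.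
  rewrite oppr0 expr0z mulr1 subrK mulr1 => -[Kb2].
  by apply: expKz_inj; rewrite /= Kb2 expr1z.
have -> : m = 0 := m0.
by rewrite -/(bsapow y) bsconjE bsexp_apow /= b2_1 expr1z oppr0 expr0z mulr1 subrK mulr_natl.
Qed.

Lemma bsexp_ab c m : bsexp k (c, 1) m = (c * geom_sum (K ^ (-1)) m, m).
Proof.
have geomE n : geom_sum (K ^ (-1)) n = K * (1 - (K ^ n)^-1) / (K - 1).
  by rewrite /geom_sum exprz_exp mulN1r -invr_expz exprN1; field_K.
case: m => n; elim: n => [|n IHn].
- by rewrite geomE expr0z invr1 subrr mulr0 mul0r mulr0.
- have -> : bsexp k (c, 1) n.+1 = bsmul k (c, 1) (bsexp k (c, 1) n) by [].
  rewrite IHn /bsmul /= !geomE intS expfzDr // expr1z exprN1.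
  by congr pair; field_K.
- rewrite /= /bsmul /bsinv /= geomE exprN1 invrK expr1z mul0r !addr0.
  by congr pair; field_K.
- have -> : bsexp k (c, 1) (Negz n.+1) = bsmul k (bsinv k (c, 1)) (bsexp k (c, 1) (Negz n)) by [].
  rewrite IHn /bsmul /bsinv /= !geomE !NegzE !opprK expr1z !invr_expz !opprK.
  rewrite (intS n.+1) intS !expfzDr // expr1z.
  by congr pair; field_K.
Qed.

Lemma bsapow_inj : injective bsapow.
Proof. by move=> a b []. Qed.

Lemma bscomm_ab_eq1 c g : bscomm k g (c, 1) = bsone <-> g = bsexp k (c, 1) g.2.
Proof.
case: g => d n; rewrite -[bsone]/(bsapow 0) bscommE bsexp_ab /= expr1z.
rewrite /geom_sum exprz_exp mulN1r exprN1 -invr_expz.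
split=> [/bsapow_inj comm0|[->]]; last by congr bsapow; field_K.
congr (_, _); apply: (mulIf (mulf_neq0 (expKz_neq0 n) K_sub1_neq0)).
by apply/eqP; rewrite -subr_eq0; apply/eqP; rewrite -[RHS]comm0; field_K.
Qed.

Lemma bscomm_bsexp_ab c m : bscomm k (bsexp k (c, 1) m) (c, 1) = bsone.
Proof. by apply/bscomm_ab_eq1; rewrite {2}bsexp_ab. Qed.

Lemma inAbP b : inAb k b <-> inZk k b.1 /\ b.2 = 1.
Proof.
have ab y : bsmul k (bsapow y) bsb = (y, 1) by rewrite /bsmul /= mul0r addr0 add0r.
split=> [[y [Zy ->]]|]; first by rewrite ab.
by case: b => y m /= [Zy ->]; exists y; rewrite ab.
Qed.

Lemma bscomm_apowr g t : bscomm k g (bsapow t) = bsapow (t * (1 - K ^ g.2)).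
Proof. by rewrite bscommE /= expr0z; congr bsapow; ring. Qed.

Lemma bscomm_apowl s g : bscomm k (bsapow s) g = bsapow (s * (K ^ g.2 - 1)).
Proof. by rewrite bscommE /= expr0z; congr bsapow; ring. Qed.

Lemma bsmul_apow a b : bsmul k (bsapow a) (bsapow b) = bsapow (a + b).
Proof. by rewrite /bsmul /= oppr0 expr0z mulr1 addr0. Qed.

Lemma tau_identityP l t s v w :
  bscomm k v (bsapow t) = bsmul k (bscomm k w (bsapow l)) (bscomm k v (bscomm k (bsapow s) v))
  <-> t * (1 - K ^ v.2) = l * (1 - K ^ w.2) - s * (1 - K ^ v.2) ^+ 2.
Proof.
rewrite bscomm_apowl !bscomm_apowr bsmul_apow.
have -> : s * (K ^ v.2 - 1) * (1 - K ^ v.2) = - (s * (1 - K ^ v.2) ^+ 2) by ring.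
by split=> [/bsapow_inj|->].
Qed.

Lemma eq0_of_dvd_pred_expn (a m p : nat) :
  (0 < p)%N -> (a < p)%N -> (k ^ p - 1 %| a * k ^ m)%N -> a = 0%N.
Proof.
move=> p_gt0 a_lt_p.
have coprime_pred : coprime (k ^ p - 1) (k ^ m).
  apply: coprimeXr; apply: (@coprime_dvdr _ (k ^ p)); first exact: dvdn_exp.
  by rewrite subn1 coprimePn // expn_gt0 k_gt0.
rewrite Gauss_dvdl //; case: a a_lt_p => // a a_lt_p /(dvdn_leq (ltn0Sn a)).
by have := ltn_expl p k_gt1; lia.
Qed.

Lemma inZk_eq0_of_dvd d : inZk k d ->
  (forall p : nat, (0 < p)%N -> exists2 q, inZk k q & d = q * (1 - K ^+ p)) -> d = 0.
Proof.
move=> /(inZkP k_gt0)[n /intrP[a dKn]] dvd_d.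
pose p := `|a|.+1.
have [q /(inZkP k_gt0)[m /intrP[b qKm]] dq] := dvd_d p isT.
have int_eq : a * (k ^ m)%N%:Z = b * (k ^ n)%N%:Z * (1 - (k ^ p)%N%:Z).
  apply: (@intr_inj rat); rewrite !intrM intrB.
  change (a%:~R * (k ^ m)%N%:R = b%:~R * (k ^ n)%N%:R * (1 - (k ^ p)%N%:R) :> rat).
  by rewrite !natrX -dKn -qKm dq; ring.
have abs_eq : (`|a| * k ^ m = `|b| * k ^ n * (k ^ p - 1))%N.
  have := congr1 absz int_eq; rewrite !abszM !absz_nat.
  by rewrite -(opprB (k ^ p)%N%:Z) subzn ?abszN ?absz_nat // expn_gt0 k_gt0.
have /eqP : `|a|%N = 0%N.
  by apply: (@eq0_of_dvd_pred_expn _ m p) => //; rewrite abs_eq dvdn_mull.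
rewrite absz_eq0 => /eqP a0; move/eqP: dKn; rewrite a0 mulf_eq0 expf_eq0 /=.
by rewrite (negbTE K_neq0) andbF orbF => /eqP.
Qed.

Lemma mul_eq_of_tau_identities l t (n : int) : inZk k l -> inZk k t ->
  (forall p : nat, (0 < p)%N -> exists2 s, inZk k s &
     t * (1 - K ^+ p) = l * (1 - (K ^+ p) ^ n) - s * (1 - K ^+ p) ^+ 2) ->
  t = l * n%:~R.
Proof.
move=> Zl Zt identities; apply/eqP; rewrite -subr_eq0; apply/eqP.
apply: inZk_eq0_of_dvd => [|p p_gt0].
  by apply: (inZkB k_gt0) => //; apply: (inZkM k_gt0) => //; apply: inZk_int.
have [s Zs identity_p] := identities p p_gt0.
have X_neq1 : 1 - K ^+ p != 0 by rewrite subr_eq0 eq_sym exprnP expKz_eq1 eqz_nat -lt0n.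
exists (l * geom_rem (K ^+ p) n - s).
  by apply: (inZkB k_gt0) => //; apply: (inZkM k_gt0) => //; apply: (inZk_geom_rem k_gt0 p).
by apply: (mulIf X_neq1); rewrite mulrBl identity_p (one_sub_expz (K ^+ p) n); ring.
Qed.

Definition tau_product_clause (gamma : BSel -> BSel -> BSel -> BSel -> Prop)
    (x y h b1 : BSel) : Prop :=
  forall v w, inBS k v -> inBS k w ->
    bscomm k v b1 = bsone -> bscomm k w b1 = bsone -> gamma h v w b1 ->
    exists u, inBS k u /\ alpha k u /\
      bscomm k v y = bsmul k (bscomm k w x) (bscomm k v (bscomm k u v)).

Lemma tau_product_clause_sound gamma c l t (n : int) :
  inZk k c -> inZk k l -> inZk k t ->
  (forall p : int, gamma (bsexp k (c, 1) n) (bsexp k (c, 1) p) (bsexp k (c, 1) (n * p)) (c, 1)) ->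
  tau_product_clause gamma (bsapow l) (bsapow t) (bsexp k (c, 1) n) (c, 1) ->
  t = l * n%:~R.
Proof.
move=> Zc Zl Zt gamma_mul clause; apply: mul_eq_of_tau_identities => // p _.
have inBS_pow (m : int) : inBS k (bsexp k (c, 1) m).
  by rewrite /inBS bsexp_ab; apply: (inZkM k_gt0) => //; apply: inZk_geom_sum.
have [[s m] [Zs [/alphaP m0 identity]]] := clause _ _ (inBS_pow p) (inBS_pow (n * p))
  (bscomm_bsexp_ab _ _) (bscomm_bsexp_ab _ _) (gamma_mul p).
have {m0} m0 : m = 0 := m0; subst m.
move/tau_identityP: identity; rewrite !bsexp_ab /= (mulrC n) -exprz_exp.
by exists s.
Qed.

Lemma tau_product_clause_complete gamma c l (n : int) :
  inZk k l ->
  (forall p q : int,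
     gamma (bsexp k (c, 1) n) (bsexp k (c, 1) p) (bsexp k (c, 1) q) (c, 1) -> n * p = q) ->
  tau_product_clause gamma (bsapow l) (bsapow (l * n%:~R)) (bsexp k (c, 1) n) (c, 1).
Proof.
move=> Zl gamma_mul [e p] [f q] _ _ /bscomm_ab_eq1 /= -> /bscomm_ab_eq1 /= ->.
move=> /gamma_mul <-; exists (bsapow (l * geom_rem (K ^ p) n)).
split; first exact: (inZkM k_gt0) (inZk_geom_rem k_gt0 _ _).
split; first exact/alphaP.
apply/tau_identityP; rewrite !bsexp_ab /= (mulrC n) -exprz_exp (one_sub_expz (K ^ p) n).
by ring.
Qed.

End BaumslagSolitar.

Theorem lemma4p8 (k : nat) (hk : (2 <= k)%N)
  (gamma : BSel -> BSel -> BSel -> BSel -> Prop)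
  (hgamma : forall b1, inAb k b1 -> forall n l m : int,
      gamma (bsexp k b1 n) (bsexp k b1 l) (bsexp k b1 m) b1 <-> n * l = m)
  (x y h b1 : BSel) (hx : inBS k x) (hy : inBS k y) (hh : inBS k h)
  (hb1 : inBS k b1) :
  tau k gamma x y h b1 <->
  (inAb k b1 /\
   exists l t : rat, [/\ inZk k l, inZk k t, x = bsapow l, y = bsapow t &
     exists z : int, h = bsexp k b1 z /\ l * z%:~R = t]).
Proof.
split.
- case: x y h b1 hx hy hh hb1 hgamma => [l xm] [t ym] [d n] [c bm] /= Zl Zt _ Zc hgamma.
  case=> /(alphaP hk) /= -> /(alphaP hk) /= -> + /(betaP hk) /= bm1; subst bm.
  move=> /(bscomm_ab_eq1 hk) /= -> clause.
  have Ab : inAb k (c, 1) by apply/(inAbP k).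
  split=> //; exists l, t; split=> //; exists n; split=> //.
  apply/esym/(tau_product_clause_sound hk Zc Zl Zt _ clause) => p.
  exact/(hgamma _ Ab).
- case=> /inAbP[Zc b1_2] [l [t [Zl _ -> -> [n [-> <-]]]]].
  case: b1 hb1 hgamma Zc b1_2 => c e /= _ hgamma Zc ->.
  have gammaP := hgamma _ (proj2 (inAbP k (c, 1)) (conj Zc erefl)).
  split; [exact/(alphaP hk) | exact/(alphaP hk) | exact: bscomm_bsexp_ab | exact/(betaP hk) | ].
  by apply: tau_product_clause_complete => // p q /gammaP.
Qed.
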